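(* Let $\Bbbk$ be a field and let $B$ be a filtered bialgebra over $\Bbbk$ (filtration $B_0\subset B_1\subset\cdots$, $\bigcup_n B_n=B$) such that $B_0$ is spanned by group-like elements. Let $I\subset B$ be the two-sided ideal generated by all elements $1-x$ with $x$ group-like. Then $I$ is also a two-sided coideal (i.e. $\Delta(I)\subset I\otimes B+B\otimes I$ and $\epsilon(I)=0$), and the quotient bialgebra $H:=B/I$, with the induced filtration $H_n:=$ image of $B_n$, is connected (i.e. $H_0=\Bbbk\cdot 1$); hence $H$ is a Hopf algebra.
   Context: A filtered bialgebra is a bialgebra $(B,m,1,\Delta,\epsilon)$ with an increasing sequence of subspaces $B_0\subset B_1\subset\cdots$, $\bigcup_n B_n=B$, such that $1\in B_0$, $B_iB_j\subset B_{i+j}$ and $\Delta(B_n)\subset\sum_{i+j=n}B_i\otimes B_j$. An element $x\neq 0$ is group-like if $\Delta(x)=x\otimes x$. *)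

From HB Require Import structures.
From mathcomp Require Import all_boot all_order all_algebra.
Set Implicit Arguments. Unset Strict Implicit. Unset Printing Implicit Defensive.
Import GRing.Theory.
Local Open Scope ring_scope.

(* Elements of U (x) V are represented by finite lists of elementary tensors
   [:: (u_1,v_1); ...] standing for  sum_i u_i (x) v_i.  Two representatives
   denote the same element of U (x) V iff every bilinear map U x V -> W into
   any K-module W takes the same value on them (this is equality in the
   algebraic tensor product, by its universal property). *)

Definition bilinear_map (K : fieldType) (U V W : lmodType K) (f : U -> V -> W) : Prop :=
  (forall (a : K) u1 u2 v, f (a *: u1 + u2) v = a *: f u1 v + f u2 v) /\
  (forall (a : K) u v1 v2, f u (a *: v1 + v2) = a *: f u v1 + f u v2).

Definition trilinear_map (K : fieldType) (U V X W : lmodType K)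
  (f : U -> V -> X -> W) : Prop :=
  (forall (a : K) u1 u2 v x, f (a *: u1 + u2) v x = a *: f u1 v x + f u2 v x) /\
  (forall (a : K) u v1 v2 x, f u (a *: v1 + v2) x = a *: f u v1 x + f u v2 x) /\
  (forall (a : K) u v x1 x2, f u v (a *: x1 + x2) = a *: f u v x1 + f u v x2).

Definition tensor_eq (K : fieldType) (U V : lmodType K) (s t : seq (U * V)) : Prop :=
  forall (W : lmodType K) (f : U -> V -> W), bilinear_map f ->
    \sum_(p <- s) f p.1 p.2 = \sum_(p <- t) f p.1 p.2.

Definition tensor3_eq (K : fieldType) (U V X : lmodType K)
  (s t : seq (U * V * X)) : Prop :=
  forall (W : lmodType K) (f : U -> V -> X -> W), trilinear_map f ->
    \sum_(p <- s) f p.1.1 p.1.2 p.2 = \sum_(p <- t) f p.1.1 p.1.2 p.2.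

Record is_bialgebra (K : fieldType) (B : algType K)
  (Delta : B -> seq (B * B)) (eps : B -> K) : Prop := {
  Delta_linear : forall (a : K) (x y : B),
    tensor_eq (Delta (a *: x + y))
              ([seq (a *: p.1, p.2) | p <- Delta x] ++ Delta y);
  Delta_coassoc : forall x : B,
    tensor3_eq [seq (q.1, q.2, p.2) | p <- Delta x, q <- Delta p.1]
               [seq (p.1, q.1, q.2) | p <- Delta x, q <- Delta p.2];
  eps_linear : forall (a : K) (x y : B), eps (a *: x + y) = a * eps x + eps y;
  counit_l : forall x : B, \sum_(p <- Delta x) eps p.1 *: p.2 = x;
  counit_r : forall x : B, \sum_(p <- Delta x) eps p.2 *: p.1 = x;
  Delta_mul : forall x y : B,
    tensor_eq (Delta (x * y))
              [seq (p.1 * q.1, p.2 * q.2) | p <- Delta x, q <- Delta y];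
  Delta_one : tensor_eq (Delta 1) [:: (1, 1)];
  eps_mul : forall x y : B, eps (x * y) = eps x * eps y;
  eps_one : eps 1 = 1
}.

Record is_bialg_filtration (K : fieldType) (B : algType K)
  (Delta : B -> seq (B * B)) (Fil : nat -> B -> Prop) : Prop := {
  Fil_zero : forall n, Fil n 0;
  Fil_lin : forall n (a : K) x y, Fil n x -> Fil n y -> Fil n (a *: x + y);
  Fil_incr : forall n x, Fil n x -> Fil n.+1 x;
  Fil_exhaust : forall x, exists n, Fil n x;
  Fil_one : Fil 0%N 1;
  Fil_mul : forall i j x y, Fil i x -> Fil j y -> Fil (i + j)%N (x * y);
  Fil_Delta : forall n x, Fil n x ->
    exists t : seq (B * B), tensor_eq (Delta x) t /\
      forall p, p \in t -> exists i j, (i + j)%N = n /\ Fil i p.1 /\ Fil j p.2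
}.

Definition grouplike (K : fieldType) (B : algType K)
  (Delta : B -> seq (B * B)) (x : B) : Prop :=
  x != 0 /\ tensor_eq (Delta x) [:: (x, x)].

Definition in_grouplike_span (K : fieldType) (B : algType K)
  (Delta : B -> seq (B * B)) (x : B) : Prop :=
  exists s : seq (K * B), (forall p, p \in s -> grouplike Delta p.2) /\
    x = \sum_(p <- s) p.1 *: p.2.

Definition in_I (K : fieldType) (B : algType K)
  (Delta : B -> seq (B * B)) (x : B) : Prop :=
  exists s : seq (B * B * B), (forall t, t \in s -> grouplike Delta t.1.2) /\
    x = \sum_(t <- s) t.1.1 * (1 - t.1.2) * t.2.

From HB Require Import structures.
From mathcomp Require Import all_boot all_order all_algebra.
From mathcomp Require Import boolp classical_sets zify.
Import GRing.Theory.
Set Implicit Arguments. Unset Strict Implicit. Unset Printing Implicit Defensive.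
Local Open Scope ring_scope.

(* The coproduct of a generator a (1 - g) b of I is
   Delta a ((1 - g) (x) 1 + g (x) (1 - g)) Delta b, so I is a coideal, and
   eps g = 1 gives eps I = 0.  Modulo I every x in B_0 is eps x 1, i.e. the
   defect d := eta eps - id maps B_0 into I.  As Delta B_n lies in
   sum_(i + j = n) B_i (x) B_j, the convolution powers d^(k) map B_n into I
   for k > n, so on B_n the truncated geometric series sum_(k <= n) d^(k) is a
   two-sided convolution inverse of id = eta eps - d modulo I: the convolution
   telescopes to eta eps - d^(n+1).  Truncating at the degree of x gives a map
   that is linear only modulo I; Zorn's lemma yields a linear map agreeing
   with it modulo I, which induces the antipode of B/I. *)

Section LinearLiftModulo.
Variables (K : fieldType) (V W : lmodType K) (J : W -> Prop) (T : V -> W).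
Hypothesis J_lin : forall (a : K) x y, J x -> J y -> J (a *: x + y).
Hypothesis T_linJ : forall (a : K) x y, J (T (a *: x + y) - (a *: T x + T y)).

Local Open Scope classical_set_scope.

(* Graphs of linear maps on subspaces of V that agree with T modulo J; the
   empty graph is allowed so that Zorn's lemma covers the empty chain. *)
Definition partial_lift (G : set (V * W)) :=
  [/\ forall (a : K) p q, G p -> G q -> G (a *: p + q),
      forall x y y', G (x, y) -> G (x, y') -> y = y' &
      forall x y, G (x, y) -> J (y - T x)].

Let J_sub x y : J x -> J y -> J (x - y).
Proof. by move=> Jx Jy; rewrite addrC -scaleN1r; apply: J_lin. Qed.

Let J_opp_T0 : J (- T 0).
Proof. by have := T_linJ 1 0 0; rewrite !scale1r addr0 opprD addrA subrr add0r. Qed.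

Lemma partial_lift_bigcup (F : set (set (V * W))) :
  F `<=` partial_lift -> total_on F subset -> partial_lift (\bigcup_(G in F) G).
Proof.
move=> Flift Ftot.
have common p q : (\bigcup_(G in F) G) p -> (\bigcup_(G in F) G) q ->
    exists2 G, F G & G p /\ G q.
  move=> [G FG Gp] [G' FG' G'q].
  have [GG'|G'G] := Ftot G G' FG FG'; first by exists G' => //; split => //; apply: GG'.
  by exists G => //; split => //; apply: G'G.
split.
- move=> a p q /common/[apply] -[G FG [Gp Gq]].
  by exists G => //; have [Gcl _ _] := Flift G FG; apply: Gcl.
- move=> x y y' /common/[apply] -[G FG [Gp Gq]].
  by have [_ Gfun _] := Flift G FG; apply: Gfun Gp Gq.
- by move=> x y [G FG Gp]; have [_ _ GJ] := Flift G FG; apply: GJ.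
Qed.

Lemma partial_lift0 G p : partial_lift G -> G p -> G 0.
Proof. by move=> [Gcl _ _] Gp; have := Gcl (-1) p p Gp Gp; rewrite scaleN1r addNr. Qed.

Lemma partial_liftU0 G : partial_lift G -> partial_lift (G `|` [set 0]).
Proof.
move=> liftG; have [Gcl Gfun GJ] := liftG.
split.
- move=> a p q [Gp|->] [Gq|->]; rewrite ?scaler0 ?add0r ?addr0; [left..|by right].
  + exact: Gcl.
  + by rewrite -[_ *: p]addr0; apply: Gcl => //; apply: partial_lift0 Gp.
  + by [].
- move=> x y y' [Gxy|[x0 y0]] [Gxy'|[x0' y'0]]; subst.
  + exact: Gfun Gxy Gxy'.
  + exact: Gfun Gxy (partial_lift0 liftG Gxy).
  + exact: Gfun (partial_lift0 liftG Gxy') Gxy'.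
  + by [].
- by move=> x y [/GJ //|[-> ->]]; rewrite sub0r; apply: J_opp_T0.
Qed.

Lemma partial_lift_extend G v : partial_lift G -> G 0 -> ~ (exists y, G (v, y)) ->
  partial_lift (fun z => exists (a : K) p, G p /\ z = p + a *: (v, T v)).
Proof.
move=> [Gcl Gfun GJ] G0 vG; split.
- move=> b _ _ [a1 [p1 [Gp1 ->]]] [a2 [p2 [Gp2 ->]]].
  exists (b * a1 + a2), (b *: p1 + p2); split; first exact: Gcl.
  by rewrite scalerDr scalerA scalerDl addrACA.
- move=> x y y' [a1 [[x1 y1] [Gp1 [-> ->]]]] [a2 [[x2 y2] [Gp2 [ex ->]]]].
  have [e12|a12] := eqVneq a1 a2.
    by subst a2; move/addIr: ex => ex; subst x2; rewrite (Gfun x1 y1 y2).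
  exfalso; apply: vG; exists ((a1 - a2)^-1 *: (y2 - y1)).
  have Ev : (a1 - a2) *: v = x2 - x1.
    by rewrite scalerBl -[x2](addrK (a2 *: v)) -ex addrAC [x1 + _]addrC addrK.
  have -> : v = (a1 - a2)^-1 *: (x2 - x1).
    by rewrite -Ev scalerA mulVf ?scale1r ?subr_eq0.
  have := Gcl (a1 - a2)^-1 _ 0 (Gcl (-1) _ _ Gp1 Gp2) G0.
  by rewrite /= !addr0 !scaleN1r ![- _ + _]addrC.
- move=> _ _ [a [[x1 y1] [Gp1 [-> ->]]]].
  have -> : y1 + a *: T v - T (x1 + a *: v) =
      (y1 - T x1) - (T (a *: v + x1) - (a *: T v + T x1)).
    by rewrite (addrC x1) opprB addrA addrACA addNr addr0.
  by apply: J_sub; [apply: GJ | apply: T_linJ].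
Qed.

Lemma linear_lift_modulo : exists S : V -> W, linear S /\ forall x, J (S x - T x).
Proof.
have [A [liftA maxA]] := Zorn_bigcup partial_lift_bigcup.
have A0 : A 0.
  apply: contrapT => nA0; apply: (maxA (A `|` [set 0])); last exact: partial_liftU0.
  by split=> [|sub]; [apply: subsetUl | apply/nA0/sub; right].
have [Acl Afun AJ] := liftA.
have domA v : exists y, A (v, y).
  apply: contrapT => nv; apply: (maxA _ _ (partial_lift_extend liftA A0 nv)); split.
    by move=> p Ap; exists 0, p; rewrite scale0r addr0.
  by move=> sub; apply/nv; exists (T v); apply: sub; exists 1, 0; rewrite scale1r add0r.
pose S v := proj1_sig (cid (domA v)).
have AS v : A (v, S v) by rewrite /S; case: cid.
exists S; split; last by move=> x; apply: AJ.
move=> a x y; apply: (Afun (a *: x + y)); first exact: AS.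
exact: (Acl a (x, S x) (y, S y)).
Qed.

End LinearLiftModulo.

Section LinearMaps.
Variables (K : fieldType) (U : lmodType K) (V : zmodType) (s : GRing.Scale.law K V)
  (f : U -> V).
Hypothesis f_lin : linear_for s f.

Lemma linear_for0 : f 0 = 0.
Proof. by rewrite -[0 in LHS]subr0 (zmod_morphism_linear f_lin) subrr. Qed.

Lemma linear_forD : {morph f : x y / x + y}.
Proof.
move=> x y; rewrite -[y in LHS]opprK -[- y]add0r !(zmod_morphism_linear f_lin).
by rewrite linear_for0 sub0r opprK.
Qed.

Lemma linear_for_sum (I : Type) (r : seq I) (F : I -> U) :
  f (\sum_(i <- r) F i) = \sum_(i <- r) f (F i).
Proof. exact: (big_morph f linear_forD linear_for0). Qed.

End LinearMaps.

Definition tensor_sum (K : fieldType) (U V W : lmodType K) (f : U -> V -> W)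
  (s : seq (U * V)) : W := \sum_(p <- s) f p.1 p.2.

Section BilinearMaps.
Variables (K : fieldType) (U V W : lmodType K) (f : U -> V -> W).
Hypothesis f_bil : bilinear_map f.

Lemma bilinear_linl v : linear (f^~ v).
Proof. by move=> a u1 u2; apply: f_bil.1. Qed.

Lemma bilinear_linr u : linear (f u).
Proof. by move=> a v1 v2; apply: f_bil.2. Qed.

Lemma tensor_sum_cat s t : tensor_sum f (s ++ t) = tensor_sum f s + tensor_sum f t.
Proof. exact: big_cat. Qed.

End BilinearMaps.

Lemma bilinear_sum (K : fieldType) (U V W : lmodType K) (I : Type) (r : seq I)
  (F : I -> U -> V -> W) : (forall i, bilinear_map (F i)) ->
  bilinear_map (fun u v => \sum_(i <- r) F i u v).
Proof.
move=> F_bil; split=> a *; rewrite scaler_sumr -big_split; apply: eq_bigr => i _.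
  exact: (F_bil i).1.
exact: (F_bil i).2.
Qed.

Section GroupLikeIdeal.
Variables (K : fieldType) (B : algType K) (Delta : B -> seq (B * B)).
Local Notation I := (in_I Delta).

Lemma in_I0 : I 0.
Proof. by exists [::]; rewrite big_nil. Qed.

Lemma in_I_lin (a : K) x y : I x -> I y -> I (a *: x + y).
Proof.
move=> [s [sg ->]] [t [tg ->]].
exists ([seq (a *: u.1.1, u.1.2, u.2) | u <- s] ++ t); split.
  by move=> u; rewrite mem_cat => /orP[/mapP[w /sg ? ->]|/tg].
rewrite big_cat big_map scaler_sumr; congr (_ + _); apply: eq_bigr => u _.
by rewrite -!scalerAl.
Qed.

Lemma in_ID x y : I x -> I y -> I (x + y).
Proof. by move=> Ix Iy; rewrite -[x]scale1r; apply: in_I_lin. Qed.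

Lemma in_IZ (a : K) x : I x -> I (a *: x).
Proof. by move=> Ix; rewrite -[_ *: _]addr0; apply: in_I_lin Ix in_I0. Qed.

Lemma in_IN x : I x -> I (- x).
Proof. by move=> Ix; rewrite -scaleN1r; apply: in_IZ. Qed.

Lemma in_IB x y : I x -> I y -> I (x - y).
Proof. by move=> Ix /in_IN; apply: in_ID. Qed.

Lemma in_I_sum (J : eqType) (r : seq J) (F : J -> B) :
  (forall j, j \in r -> I (F j)) -> I (\sum_(j <- r) F j).
Proof.
elim: r => [|j r IHr] Ir; first by rewrite big_nil; apply: in_I0.
rewrite big_cons; apply: in_ID; first by apply: Ir; rewrite mem_head.
by apply: IHr => k kr; apply: Ir; rewrite in_cons kr orbT.
Qed.

Lemma in_I_mull b x : I x -> I (b * x).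
Proof.
move=> [s [sg ->]]; exists [seq (b * u.1.1, u.1.2, u.2) | u <- s]; split.
  by move=> u /mapP[w /sg ? ->].
by rewrite big_map mulr_sumr; apply: eq_bigr => u _; rewrite !mulrA.
Qed.

Lemma in_I_mulr x b : I x -> I (x * b).
Proof.
move=> [s [sg ->]]; exists [seq (u.1.1, u.1.2, u.2 * b) | u <- s]; split.
  by move=> u /mapP[w /sg ? ->].
by rewrite big_map mulr_suml; apply: eq_bigr => u _; rewrite !mulrA.
Qed.

Lemma in_I_1subg g : grouplike Delta g -> I (1 - g).
Proof.
move=> g_gl; exists [:: (1, g, 1)]; split; last by rewrite big_seq1 mul1r mulr1.
by move=> t; rewrite inE => /eqP ->.
Qed.

End GroupLikeIdeal.

Lemma bilinear_sandwich (K : fieldType) (B : algType K) (W : lmodType K)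
  (f : B -> B -> W) (a b c d : B) :
  bilinear_map f -> bilinear_map (fun u v => f (a * u * b) (c * v * d)).
Proof.
move=> f_bil; split=> k * /=; rewrite mulrDr mulrDl -scalerAr -scalerAl.
  exact: f_bil.1.
exact: f_bil.2.
Qed.

Section Bialgebra.
Variables (K : fieldType) (B : algType K) (Delta : B -> seq (B * B)) (eps : B -> K).
Hypothesis HB : is_bialgebra Delta eps.
Local Notation I := (in_I Delta).

Lemma tensor_sum_Delta_linear (W : lmodType K) (f : B -> B -> W) :
  bilinear_map f -> linear (fun x => tensor_sum f (Delta x)).
Proof.
move=> f_bil a x y; rewrite /tensor_sum (Delta_linear HB a x y f_bil) big_cat big_map.
rewrite scaler_sumr; congr (_ + _); apply: eq_bigr => p _.
exact: (scalable_linear (bilinear_linl f_bil p.2)).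
Qed.

Lemma tensor_sum_Delta_mul (W : lmodType K) (f : B -> B -> W) x y :
  bilinear_map f -> tensor_sum f (Delta (x * y)) =
    \sum_(p <- Delta x) \sum_(q <- Delta y) f (p.1 * q.1) (p.2 * q.2).
Proof.
by move=> f_bil; rewrite /tensor_sum (Delta_mul HB x y f_bil) big_allpairs_dep.
Qed.

Lemma tensor_sum_Delta_mul3 (W : lmodType K) (f : B -> B -> W) x y z :
  bilinear_map f -> tensor_sum f (Delta (x * y * z)) =
    \sum_(p <- Delta x) \sum_(r <- Delta z)
      tensor_sum (fun u v => f (p.1 * u * r.1) (p.2 * v * r.2)) (Delta y).
Proof.
move=> f_bil; pose h u v := \sum_(r <- Delta z) f (u * r.1) (v * r.2).
have h_bil : bilinear_map h.
  apply: bilinear_sum => r; split=> c * /=; rewrite mulrDl -scalerAl.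
    exact: f_bil.1.
  exact: f_bil.2.
rewrite tensor_sum_Delta_mul // -[LHS]/(tensor_sum h _) tensor_sum_Delta_mul //.
by apply: eq_bigr => p _; rewrite exchange_big.
Qed.

Lemma eps_scalar : scalar eps.
Proof. exact: eps_linear HB. Qed.

Lemma eps_grouplike g : grouplike Delta g -> eps g = 1.
Proof.
move=> [g_neq0 Dg].
have eps_bil : bilinear_map (fun u v : B => eps u *: v).
  split=> a *; first by rewrite eps_scalar scalerDl scalerA.
  by rewrite scalerDr !scalerA mulrC.
have := counit_l HB g; rewrite (Dg _ _ eps_bil) big_seq1 /= => /eqP.
rewrite -subr_eq0 -[X in _ - X]scale1r -scalerBl scaler_eq0 (negbTE g_neq0) orbF.
by rewrite subr_eq0 => /eqP.
Qed.

Lemma eps_in_I x : I x -> eps x = 0.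
Proof.
move=> [s [sg ->]]; rewrite (linear_for_sum eps_scalar) big1_seq // => u /= /sg u_gl.
rewrite !(eps_mul HB) (zmod_morphism_linear eps_scalar) (eps_one HB).
by rewrite (eps_grouplike u_gl) subrr mulr0 mul0r.
Qed.

Definition Delta_splits_I (x : B) := exists t : seq (B * B),
  tensor_eq (Delta x) t /\ forall p, p \in t -> I p.1 \/ I p.2.

Lemma Delta_splits_I0 : Delta_splits_I 0.
Proof.
exists [::]; split=> // W f f_bil.
by rewrite big_nil; apply: (linear_for0 (tensor_sum_Delta_linear f_bil)).
Qed.

Lemma Delta_splits_ID x y :
  Delta_splits_I x -> Delta_splits_I y -> Delta_splits_I (x + y).
Proof.
move=> [s [Ds sI]] [t [Dt tI]]; exists (s ++ t); split.
  move=> W f f_bil; change (tensor_sum f (Delta (x + y)) = tensor_sum f (s ++ t)).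
  rewrite (linear_forD (tensor_sum_Delta_linear f_bil)) /tensor_sum big_cat.
  by rewrite (Ds _ _ f_bil) (Dt _ _ f_bil).
by move=> p; rewrite mem_cat => /orP[/sI|/tI].
Qed.

Lemma tensor_sum_Delta_1subg (W : lmodType K) (f : B -> B -> W) g :
  bilinear_map f -> grouplike Delta g -> tensor_sum f (Delta (1 - g)) = f 1 1 - f g g.
Proof.
move=> f_bil [_ Dg]; rewrite (zmod_morphism_linear (tensor_sum_Delta_linear f_bil)).
by rewrite /tensor_sum (Delta_one HB f_bil) (Dg _ _ f_bil) !big_seq1.
Qed.

Lemma Delta_splits_I_gen a g b : grouplike Delta g -> Delta_splits_I (a * (1 - g) * b).
Proof.
move=> g_gl.
exists ([seq (p.1 * (1 - g) * r.1, p.2 * r.2) | p <- Delta a, r <- Delta b] ++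
        [seq (p.1 * g * r.1, p.2 * (1 - g) * r.2) | p <- Delta a, r <- Delta b]).
split; last first.
  move=> u; rewrite mem_cat => /orP[] /allpairsP[[p r] [_ _ ->]] /=.
    by left; apply/in_I_mulr/in_I_mull/in_I_1subg.
  by right; apply/in_I_mulr/in_I_mull/in_I_1subg.
move=> W f f_bil; rewrite -/(tensor_sum f _) tensor_sum_Delta_mul3 //.
under eq_bigr => p _.
  under eq_bigr => r _ do
    rewrite (tensor_sum_Delta_1subg (bilinear_sandwich p.1 r.1 p.2 r.2 f_bil) g_gl).
  over.
rewrite -[RHS]/(tensor_sum f (_ ++ _)) tensor_sum_cat /tensor_sum !big_allpairs_dep.
rewrite -big_split; apply: eq_bigr => p _ /=.
rewrite -big_split; apply: eq_bigr => r _ /=.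
rewrite !mulr1 !mulrBr !mulr1 !mulrBl (zmod_morphism_linear (bilinear_linl f_bil _)).
by rewrite (zmod_morphism_linear (bilinear_linr f_bil _)) addrA subrK.
Qed.

Lemma in_I_Delta_splits x : I x -> Delta_splits_I x.
Proof.
move=> [s [sg ->]]; elim: s sg => [|u s IHs] sg.
  by rewrite big_nil; apply: Delta_splits_I0.
rewrite big_cons; apply: Delta_splits_ID; first by apply/Delta_splits_I_gen/sg/mem_head.
by apply: IHs => v vs; apply: sg; rewrite in_cons vs orbT.
Qed.

Definition conv (F G : B -> B) (x : B) : B :=
  tensor_sum (fun u v => F u * G v) (Delta x).

Definition eta_eps (x : B) : B := (eps x)%:A.

Lemma eta_eps_linear : linear eta_eps.
Proof. by move=> a x y; rewrite /eta_eps eps_scalar scalerDl scalerA. Qed.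

Lemma bilinear_mul_linear (F G : B -> B) :
  linear F -> linear G -> bilinear_map (fun u v => F u * G v).
Proof.
move=> F_lin G_lin; split=> a *; first by rewrite F_lin mulrDl scalerAl.
by rewrite G_lin mulrDr scalerAr.
Qed.

Lemma conv_linear (F G : B -> B) : linear F -> linear G -> linear (conv F G).
Proof. by move=> F_lin G_lin; apply/tensor_sum_Delta_linear/bilinear_mul_linear. Qed.

Lemma conv_tensor_eq (F G : B -> B) x t : linear F -> linear G ->
  tensor_eq (Delta x) t -> conv F G x = tensor_sum (fun u v => F u * G v) t.
Proof. by move=> F_lin G_lin Dt; apply: Dt; apply: bilinear_mul_linear. Qed.

Lemma eq_conv (F1 F2 G1 G2 : B -> B) : F1 =1 F2 -> G1 =1 G2 -> conv F1 G1 =1 conv F2 G2.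
Proof. by move=> eqF eqG x; apply: eq_bigr => p _; rewrite eqF eqG. Qed.

Lemma conv_suml (J : Type) (r : seq J) (F : J -> B -> B) (G : B -> B) x :
  conv (fun y => \sum_(j <- r) F j y) G x = \sum_(j <- r) conv (F j) G x.
Proof.
by rewrite /conv /tensor_sum exchange_big; apply: eq_bigr => p _; rewrite mulr_suml.
Qed.

Lemma conv_sumr (J : Type) (r : seq J) (F : B -> B) (G : J -> B -> B) x :
  conv F (fun y => \sum_(j <- r) G j y) x = \sum_(j <- r) conv F (G j) x.
Proof.
by rewrite /conv /tensor_sum exchange_big; apply: eq_bigr => p _; rewrite mulr_sumr.
Qed.

Lemma conv_subl (F1 F2 G : B -> B) x :
  conv (fun y => F1 y - F2 y) G x = conv F1 G x - conv F2 G x.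
Proof. by rewrite /conv /tensor_sum -sumrB; apply: eq_bigr => p _; rewrite mulrBl. Qed.

Lemma conv_subr (F G1 G2 : B -> B) x :
  conv F (fun y => G1 y - G2 y) x = conv F G1 x - conv F G2 x.
Proof. by rewrite /conv /tensor_sum -sumrB; apply: eq_bigr => p _; rewrite mulrBr. Qed.

Lemma conv_eta_eps_r (F : B -> B) : linear F -> conv F eta_eps =1 F.
Proof.
move=> F_lin x; rewrite -[in RHS](counit_r HB x) (linear_for_sum F_lin).
by apply: eq_bigr => p _; rewrite mulr_algr (scalable_linear F_lin).
Qed.

Lemma conv_eta_eps_l (F : B -> B) : linear F -> conv eta_eps F =1 F.
Proof.
move=> F_lin x; rewrite -[in RHS](counit_l HB x) (linear_for_sum F_lin).
by apply: eq_bigr => p _; rewrite mulr_algl (scalable_linear F_lin).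
Qed.

Lemma conv_assoc (F G H : B -> B) : linear F -> linear G -> linear H ->
  conv (conv F G) H =1 conv F (conv G H).
Proof.
move=> F_lin G_lin H_lin x.
have FGH_tri : trilinear_map (fun u v w => F u * G v * H w).
  split; [|split] => a *; rewrite ?F_lin ?G_lin ?H_lin.
  - by rewrite !mulrDl -!scalerAl.
  - by rewrite mulrDr mulrDl -scalerAr -scalerAl.
  - by rewrite mulrDr -scalerAr.
have := Delta_coassoc HB x FGH_tri.
rewrite !big_allpairs_dep /conv /tensor_sum => coassoc.
transitivity (\sum_(p <- Delta x) \sum_(q <- Delta p.1) F q.1 * G q.2 * H p.2).
  by apply: eq_bigr => p _; rewrite mulr_suml.
rewrite coassoc; apply: eq_bigr => p _; rewrite mulr_sumr.
by apply: eq_bigr => q _; rewrite mulrA.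
Qed.

Fixpoint conv_pow (F : B -> B) (k : nat) : B -> B :=
  if k is k'.+1 then conv (conv_pow F k') F else eta_eps.

Definition conv_geom (F : B -> B) (N : nat) (x : B) : B :=
  \sum_(0 <= k < N) conv_pow F k x.

Section ConvPowers.
Variable F : B -> B.
Hypothesis F_lin : linear F.

Lemma conv_pow_linear k : linear (conv_pow F k).
Proof. by elim: k => [|k IHk] /=; [apply: eta_eps_linear | apply: conv_linear]. Qed.

Lemma conv_pow_succl k : conv F (conv_pow F k) =1 conv_pow F k.+1.
Proof.
elim: k => [|k IHk] x /=; first by rewrite conv_eta_eps_r // conv_eta_eps_l.
by rewrite -conv_assoc //; [apply: eq_conv | apply: conv_pow_linear].
Qed.

Lemma conv_geom_linear N : linear (conv_geom F N).
Proof.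
move=> a x y; rewrite /conv_geom scaler_sumr -big_split.
by apply: eq_bigr => k _; apply: conv_pow_linear.
Qed.

Lemma conv_geom_subl N :
  conv (conv_geom F N) (fun y => eta_eps y - F y) =1 fun x => eta_eps x - conv_pow F N x.
Proof.
move=> x; rewrite conv_suml (telescope_sumr_eq (fun k => - conv_pow F k x)) //=.
  by rewrite opprK addrC.
by move=> k _; rewrite conv_subr conv_eta_eps_r ?opprK 1?addrC //; apply: conv_pow_linear.
Qed.

Lemma conv_geom_subr N :
  conv (fun y => eta_eps y - F y) (conv_geom F N) =1 fun x => eta_eps x - conv_pow F N x.
Proof.
move=> x; rewrite conv_sumr (telescope_sumr_eq (fun k => - conv_pow F k x)) //=.
  by rewrite opprK addrC.
move=> k _; rewrite conv_subl conv_eta_eps_l ?conv_pow_succl ?opprK 1?addrC //.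
exact: conv_pow_linear.
Qed.

End ConvPowers.

Definition defect (x : B) : B := eta_eps x - x.

Lemma defect_linear : linear defect.
Proof. by move=> a x y; rewrite /defect eta_eps_linear scalerBr opprD addrACA. Qed.

Lemma id_eta_eps_defect : id =1 fun y => eta_eps y - defect y.
Proof. by move=> y; rewrite /defect opprB addrC subrK. Qed.

Lemma defect_grouplike_span x : in_grouplike_span Delta x -> I (defect x).
Proof.
move=> [s [sg ->]]; rewrite (linear_for_sum defect_linear); apply: in_I_sum => p /sg p_gl.
rewrite (scalable_linear defect_linear) /defect /eta_eps (eps_grouplike p_gl) scale1r.
exact/in_IZ/in_I_1subg.
Qed.

Lemma conv_pow_defect_in_I k x : I x -> I (conv_pow defect k x).
Proof.
elim: k x => [|k IHk] x Ix /=.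
  by rewrite /eta_eps eps_in_I // scale0r; apply: in_I0.
have [t [Dt tI]] := in_I_Delta_splits Ix.
rewrite (conv_tensor_eq (conv_pow_linear defect_linear k) defect_linear Dt).
apply: in_I_sum => p /tI[Ip1|Ip2]; first exact/in_I_mulr/IHk.
by apply: in_I_mull; rewrite /defect /eta_eps eps_in_I // scale0r sub0r; apply: in_IN.
Qed.

Section Filtration.
Variable Fil : nat -> B -> Prop.
Hypothesis HF : is_bialg_filtration Delta Fil.
Hypothesis Fil0_span : forall x, Fil 0%N x <-> in_grouplike_span Delta x.

Lemma Fil_le m n x : (m <= n)%N -> Fil m x -> Fil n x.
Proof.
move=> /subnKC <-; elim: (n - m)%N => [|d IHd] Fx; first by rewrite addn0.
by rewrite addnS; apply/(Fil_incr HF)/IHd.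
Qed.

Lemma Fil_Delta_le n x : Fil n x ->
  exists t, tensor_eq (Delta x) t /\ forall p, p \in t -> Fil n p.1 /\ Fil n p.2.
Proof.
move=> /(Fil_Delta HF)[t [Dt tFil]]; exists t; split=> // p /tFil[i [j [<- [Fi Fj]]]].
by split; [apply: Fil_le Fi; rewrite leq_addr | apply: Fil_le Fj; rewrite leq_addl].
Qed.

Lemma conv_pow_defect_nil k n x : (n < k)%N -> Fil n x -> I (conv_pow defect k x).
Proof.
elim: k n x => [//|k IHk] n x ltnk /(Fil_Delta HF)[t [Dt tFil]] /=.
rewrite (conv_tensor_eq (conv_pow_linear defect_linear k) defect_linear Dt).
apply: in_I_sum => p /tFil[i [[|j] [ij [Fi Fj]]]].
  exact/in_I_mull/defect_grouplike_span/Fil0_span.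
by apply/in_I_mulr/(IHk i) => //; lia.
Qed.

Lemma conv_geom_defect_stable n N x : (n < N)%N -> Fil n x ->
  I (conv_geom defect N x - conv_geom defect n.+1 x).
Proof.
move=> ltnN Fx; rewrite /conv_geom (big_cat_nat (leq0n n.+1) ltnN) /= addrAC subrr add0r.
apply: in_I_sum => k; rewrite mem_index_iota => /andP[ltnk _].
exact: conv_pow_defect_nil ltnk Fx.
Qed.

Definition Fil_degree x : nat := proj1_sig (cid (Fil_exhaust HF x)).

Lemma Fil_degreeP x : Fil (Fil_degree x) x.
Proof. by rewrite /Fil_degree; case: cid. Qed.

Definition antipode_approx x : B := conv_geom defect (Fil_degree x).+1 x.

Lemma antipode_approx_geom n x : Fil n x ->
  I (antipode_approx x - conv_geom defect n.+1 x).
Proof.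
move=> Fx; set N := (maxn n (Fil_degree x)).+1.
have -> : antipode_approx x - conv_geom defect n.+1 x =
    (conv_geom defect N x - conv_geom defect n.+1 x) -
    (conv_geom defect N x - antipode_approx x).
  by rewrite [in RHS]opprB [in RHS]addrC [in RHS]addrA subrK.
apply: in_IB; apply: conv_geom_defect_stable; rewrite ?ltnS ?leq_maxl ?leq_maxr //.
exact: Fil_degreeP.
Qed.

Lemma antipode_approx_linear_modI (a : K) x y :
  I (antipode_approx (a *: x + y) - (a *: antipode_approx x + antipode_approx y)).
Proof.
set N := maxn (Fil_degree (a *: x + y)) (maxn (Fil_degree x) (Fil_degree y)).
have FN z : (Fil_degree z <= N)%N -> Fil N z.
  by move=> le; apply: Fil_le le (Fil_degreeP z).
have -> : antipode_approx (a *: x + y) - (a *: antipode_approx x + antipode_approx y) =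
    (antipode_approx (a *: x + y) - conv_geom defect N.+1 (a *: x + y)) -
    (a *: (antipode_approx x - conv_geom defect N.+1 x) +
     (antipode_approx y - conv_geom defect N.+1 y)).
  by rewrite (conv_geom_linear defect_linear) scalerBr addrACA -opprD opprB addrA subrK.
apply/in_IB/in_I_lin; apply/antipode_approx_geom/FN; rewrite /N ?leq_maxl //.
  by rewrite (leq_trans (leq_maxl _ (Fil_degree y))) ?leq_maxr.
by rewrite (leq_trans (leq_maxr (Fil_degree x) _)) ?leq_maxr.
Qed.

Section AntipodeLift.
Variable S : B -> B.
Hypothesis S_lin : linear S.
Hypothesis S_approx : forall x, I (S x - antipode_approx x).

Lemma lift_in_I x : I x -> I (S x).
Proof.
move=> Ix; rewrite -(subrK (antipode_approx x) (S x)); apply: in_ID => //.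
by apply: in_I_sum => k _; apply: conv_pow_defect_in_I.
Qed.

Lemma lift_geom n x : Fil n x -> I (S x - conv_geom defect n.+1 x).
Proof.
move=> Fx; rewrite -(subrK (antipode_approx x) (S x)) -addrA.
exact: in_ID (S_approx x) (antipode_approx_geom Fx).
Qed.

Lemma conv_modI_l (F F' G : B -> B) n x : linear F -> linear F' -> linear G ->
  (forall y, Fil n y -> I (F y - F' y)) -> Fil n x -> I (conv F G x - conv F' G x).
Proof.
move=> F_lin F'_lin G_lin FF' /Fil_Delta_le[t [Dt tFil]].
rewrite !(conv_tensor_eq _ G_lin Dt) // /tensor_sum -sumrB.
by apply: in_I_sum => p /tFil[Fp1 _]; rewrite -mulrBl; apply/in_I_mulr/FF'.
Qed.

Lemma conv_modI_r (F G G' : B -> B) n x : linear F -> linear G -> linear G' ->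
  (forall y, Fil n y -> I (G y - G' y)) -> Fil n x -> I (conv F G x - conv F G' x).
Proof.
move=> F_lin G_lin G'_lin GG' /Fil_Delta_le[t [Dt tFil]].
rewrite !(conv_tensor_eq F_lin _ Dt) // /tensor_sum -sumrB.
by apply: in_I_sum => p /tFil[_ Fp2]; rewrite -mulrBr; apply/in_I_mull/GG'.
Qed.

Lemma lift_antipode_l x : I (conv S id x - eta_eps x).
Proof.
have [n Fx] := Fil_exhaust HF x.
have -> : conv S id x - eta_eps x = (conv S id x - conv (conv_geom defect n.+1) id x) -
    conv_pow defect n.+1 x.
  rewrite (eq_conv (frefl (conv_geom defect n.+1)) id_eta_eps_defect x).
  by rewrite (conv_geom_subl defect_linear) opprB addrAC addrA subrK.
apply: in_IB; last exact: conv_pow_defect_nil (ltnSn n) Fx.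
apply: conv_modI_l Fx => //; first exact: (conv_geom_linear defect_linear n.+1).
exact: lift_geom.
Qed.

Lemma lift_antipode_r x : I (conv id S x - eta_eps x).
Proof.
have [n Fx] := Fil_exhaust HF x.
have -> : conv id S x - eta_eps x = (conv id S x - conv id (conv_geom defect n.+1) x) -
    conv_pow defect n.+1 x.
  rewrite (eq_conv id_eta_eps_defect (frefl (conv_geom defect n.+1)) x).
  by rewrite (conv_geom_subr defect_linear) opprB addrAC addrA subrK.
apply: in_IB; last exact: conv_pow_defect_nil (ltnSn n) Fx.
apply: conv_modI_r Fx => //; first exact: (conv_geom_linear defect_linear n.+1).
exact: lift_geom.
Qed.

End AntipodeLift.

Lemma antipode_mod_I : exists S : B -> B, [/\ linear S, forall x, I x -> I (S x) &
  forall x, I (conv S id x - eta_eps x) /\ I (conv id S x - eta_eps x)].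
Proof.
have [S [S_lin S_approx]] :=
  linear_lift_modulo (@in_I_lin _ _ Delta) antipode_approx_linear_modI.
exists S; split=> // [x|x]; first exact: lift_in_I.
by split; [apply: lift_antipode_l | apply: lift_antipode_r].
Qed.

End Filtration.
End Bialgebra.

Unset Implicit Arguments.

Theorem lemma3p5 (K : fieldType) (B : algType K)
  (Delta : B -> seq (B * B)) (eps : B -> K) (Fil : nat -> B -> Prop) :
  is_bialgebra Delta eps ->
  is_bialg_filtration Delta Fil ->
  (forall x : B, Fil 0%N x <-> in_grouplike_span Delta x) ->
  (* I is a two-sided coideal *)
  ((forall x : B, in_I Delta x ->
      exists t : seq (B * B), tensor_eq (Delta x) t /\
        forall p, p \in t -> in_I Delta p.1 \/ in_I Delta p.2) /\
   (forall x : B, in_I Delta x -> eps x = 0)) /\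
  (* H = B/I with H_n = image of B_n is connected: H_0 = K 1 *)
  ((forall x : B, Fil 0%N x -> exists c : K, in_I Delta (x - c%:A)) /\
   (forall c : K, exists x : B, Fil 0%N x /\ in_I Delta (x - c%:A))) /\
  (* H is a Hopf algebra: an antipode S on H = B/I, given by a linear lift
     S : B -> B preserving I, with m(S (x) id)Delta = m(id (x) S)Delta = eta eps in H *)
  (exists S : B -> B,
     (forall (a : K) (x y : B), S (a *: x + y) = a *: S x + S y) /\
     (forall x : B, in_I Delta x -> in_I Delta (S x)) /\
     (forall x : B,
        in_I Delta (\sum_(p <- Delta x) S p.1 * p.2 - (eps x)%:A) /\
        in_I Delta (\sum_(p <- Delta x) p.1 * S p.2 - (eps x)%:A))).
Proof.
move=> HB HF Fil0_span; split; [split|split; [split|]].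
- exact: in_I_Delta_splits HB.
- exact: eps_in_I HB.
- move=> x /Fil0_span/(defect_grouplike_span HB) Ix.
  by exists (eps x); rewrite -opprB; apply: in_IN.
- move=> c; exists c%:A; split; last by rewrite subrr; apply: in_I0.
  by have := Fil_lin HF c (Fil_one HF) (Fil_zero HF 0); rewrite addr0.
- have [S [S_lin S_I S_antipode]] := antipode_mod_I HB HF Fil0_span.
  by exists S.
Qed.
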